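(* Let $G$ be a simple stochastic game and $\sigma$ a positional MAX strategy. There exists a positional best response $\tau$ to $\sigma$ such that for every positional MIN strategy $\tau'$ we have $Z(\sigma,\tau')\subseteq Z(\sigma,\tau)$.
   Context: A simple stochastic game (SSG) $G$ is a finite directed graph whose vertex set $V$ is partitioned into MAX vertices, MIN vertices, random vertices and a nonempty set $V_S$ of sinks; every non-sink vertex has at least one outgoing arc, every sink has exactly one outgoing arc, a self-loop; each random vertex $x$ carries a rational probability distribution $p_x$ on its out-neighbourhood, positive on every out-neighbour; each sink $s$ has rational value $\mathrm{Val}(s)\in[0,1]$. A positional MAX (resp. MIN) strategy assigns to each MAX (resp. MIN) vertex one of its out-neighbours. Under $\sigma,\tau$ from start $x_0$, the random play moves from MAX vertex $x$ to $\sigma(x)$, from MIN vertex $x$ to $\tau(x)$, from random vertex $x$ to an out-neighbour drawn by $p_x$ independently, and stays at a sink once reached; its value is $\mathrm{Val}(s)$ if it reaches sink $s$, else $0$, and $v_{\sigma,\tau}(x_0)$ is its expectation. A best response to $\sigma$ is a MIN strategy $\tau$ with $v_{\sigma,\tau}\le v_{\sigma,\tau'}$ pointwise for all MIN strategies $\tau'$. An absorbing set for $(\sigma,\tau)$ is a set $Z\subseteq V\setminus V_S$ such that, starting from any vertex of $Z$ and playing according to $(\sigma,\tau)$, the probability of ever reaching a vertex of $V\setminus Z$ is zero. $Z(\sigma,\tau)$ denotes the union of all absorbing sets for $(\sigma,\tau)$. *)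

From HB Require Import structures.
From mathcomp Require Import all_boot all_order all_algebra.
From mathcomp Require Import all_classical all_reals all_analysis.
Set Implicit Arguments. Unset Strict Implicit. Unset Printing Implicit Defensive.
Import Order.TTheory GRing.Theory Num.Theory.
Import numFieldNormedType.Exports.
Local Open Scope ring_scope.

Inductive vkind := VMax | VMin | VRand | VSink.

Definition is_sinkk (k : vkind) : bool := if k is VSink then true else false.

Record ssg (R : realType) (V : finType) := SSG {
  kind : V -> vkind;
  arc : rel V;
  prob : V -> V -> R;
  sval : V -> R;
  sinks_nonempty : exists s, kind s = VSink;
  out_nonempty : forall x, kind x <> VSink -> exists y, arc x y;
  sink_selfloop : forall s, kind s = VSink -> forall y, arc s y = (y == s);
  prob_support : forall x, kind x = VRand -> forall y,
      (arc x y -> 0 < prob x y) /\ (~~ arc x y -> prob x y = 0);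
  prob_sum1 : forall x, kind x = VRand -> \sum_(y : V) prob x y = 1;
  prob_rat : forall x, kind x = VRand -> forall y, exists q : rat, prob x y = ratr q;
  sval_range : forall s, kind s = VSink -> 0 <= sval s <= 1;
  sval_rat : forall s, kind s = VSink -> exists q : rat, sval s = ratr q
}.

Section Game.
Variables (R : realType) (V : finType) (G : ssg R V).

Definition is_sink (x : V) : bool := is_sinkk (kind G x).

(** Positional strategies (only the values on the player's own vertices matter). *)
Definition max_strategy (sigma : V -> V) : Prop :=
  forall x, kind G x = VMax -> arc G x (sigma x).
Definition min_strategy (tau : V -> V) : Prop :=
  forall x, kind G x = VMin -> arc G x (tau x).

Definition trans (sigma tau : V -> V) (x y : V) : R :=
  match kind G x with
  | VMax => (sigma x == y)%:R
  | VMin => (tau x == y)%:R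
  | VRand => prob G x y
  | VSink => (x == y)%:R
  end.

Fixpoint nstep (sigma tau : V -> V) (n : nat) (x y : V) : R :=
  match n with
  | 0 => (x == y)%:R
  | n'.+1 => \sum_(z : V) trans sigma tau x z * nstep sigma tau n' z y
  end.

(** v_{sigma,tau}(x0): expected payoff = sum over sinks s of Val(s) times the
    probability of ever reaching s; since sinks are absorbing, the latter is
    the limit of the probability of being at s after n steps. *)
Definition value (sigma tau : V -> V) (x0 : V) : R :=
  limn (fun n => \sum_(s : V | is_sink s) sval G s * nstep sigma tau n x0 s).

Definition best_response (sigma tau : V -> V) : Prop :=
  min_strategy tau /\
  forall tau', min_strategy tau' -> forall x, value sigma tau x <= value sigma tau' x.

Fixpoint hit_within (sigma tau : V -> V) (A : {set V}) (n : nat) (x : V) : R :=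
  match n with
  | 0 => (x \in A)%:R
  | n'.+1 => if x \in A then 1
             else \sum_(z : V) trans sigma tau x z * hit_within sigma tau A n' z
  end.

Definition hit_prob (sigma tau : V -> V) (A : {set V}) (x : V) : R :=
  limn (fun n : nat => (hit_within sigma tau A n x : R^o)).

Definition absorbing (sigma tau : V -> V) (Z : {set V}) : Prop :=
  (forall x, x \in Z -> ~~ is_sink x) /\
  forall x, x \in Z -> hit_prob sigma tau (~: Z) x = 0.

Definition Zunion (sigma tau : V -> V) : {set V} :=
  [set x | `[< exists Z : {set V}, absorbing sigma tau Z /\ x \in Z >] ].

End Game.

(** A best response exists: a positional MIN strategy minimising the sum of
    its values is pointwise optimal, because switching, at every vertex, to
    whichever of two strategies has the smaller value yields a strategy whose
    value is at most the minimum of the two.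

    Let W be the union of the sets Z(sigma, tau') over all positional tau'.
    Patch a best response by playing, at each vertex y of W, the move of some
    tau' with y in Z(sigma, tau'): every move then stays inside an absorbing
    set of W, so W is absorbing for the patched strategy, its value vanishes
    on W, and it agrees with the best response elsewhere.  Hence the patched
    strategy is still a best response, and its Z contains W. *)
From Pilot Require Import Defs.
From HB Require Import structures.
From mathcomp Require Import all_boot all_order all_algebra.
From mathcomp Require Import all_classical all_reals all_analysis.
Import Order.TTheory GRing.Theory Num.Theory.
Import numFieldNormedType.Exports.
Local Open Scope ring_scope.

Set Implicit Arguments. Unset Strict Implicit. Unset Printing Implicit Defensive.

Section Game.
Variables (R : realType) (V : finType) (G : ssg R V) (sigma : V -> V).

Local Notation sval := (Defs.sval G).
Local Notation arc := (Defs.arc G).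
Local Notation trans := (Defs.trans G sigma).
Local Notation value := (Defs.value G sigma).
Local Notation hit_within := (Defs.hit_within G sigma).
Local Notation Zunion := (Defs.Zunion G sigma).
Local Notation absorbing := (Defs.absorbing G sigma).

Lemma sink_kind s : is_sink G s -> kind G s = VSink.
Proof. by rewrite /is_sink; case: (kind G s). Qed.

Lemma sval_ge0 s : is_sink G s -> 0 <= sval s.
Proof. by move=> /sink_kind /sval_range /andP[]. Qed.

Lemma sval_le1 s : is_sink G s -> sval s <= 1.
Proof. by move=> /sink_kind /sval_range /andP[]. Qed.

Lemma sum_delta_mul (a : V) (f : V -> R) : \sum_y (a == y)%:R * f y = f a.
Proof.
rewrite (bigD1 a) //= eqxx mul1r big1 ?addr0 // => y ya.
by rewrite eq_sym (negbTE ya) mul0r.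
Qed.

Lemma trans_ge0 tau x y : 0 <= trans tau x y.
Proof.
rewrite /Defs.trans; case kx: (kind G x) => //.
have [arc_pos narc_0] := prob_support kx y.
by case: (boolP (arc x y)) => xy; [exact/ltW/arc_pos | rewrite narc_0].
Qed.

Lemma trans_sum1 tau x : \sum_y trans tau x y = 1.
Proof.
have sum_delta (a : V) : \sum_y (a == y)%:R = 1 :> R.
  by rewrite -[RHS](sum_delta_mul a (fun=> 1)); apply: eq_bigr => y _; rewrite mulr1.
by rewrite /Defs.trans; case kx: (kind G x); rewrite ?sum_delta //; exact: prob_sum1.
Qed.

Lemma trans_sink tau s y : is_sink G s -> trans tau s y = (s == y)%:R.
Proof. by move=> /sink_kind ks; rewrite /Defs.trans ks. Qed.

Lemma trans_eq_at tau1 tau2 x y : tau1 x = tau2 x -> trans tau1 x y = trans tau2 x y.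
Proof. by move=> eq12; rewrite /Defs.trans eq12. Qed.

Definition next_expect tau (m : V -> R) x := \sum_y trans tau x y * m y.

Lemma next_expect_le tau m1 m2 :
  (forall y, m1 y <= m2 y) -> forall x, next_expect tau m1 x <= next_expect tau m2 x.
Proof. by move=> le12 x; apply: ler_sum => y _; rewrite ler_wpM2l ?trans_ge0. Qed.

Lemma next_expect_bounds tau m x :
  (forall y, 0 <= m y <= 1) -> 0 <= next_expect tau m x <= 1.
Proof.
move=> m01; apply/andP; split.
  by apply: sumr_ge0 => y _; rewrite mulr_ge0 ?trans_ge0 //; case/andP: (m01 y).
rewrite -(trans_sum1 tau x); apply: ler_sum => y _.
by rewrite ler_piMr ?trans_ge0 //; case/andP: (m01 y).
Qed.

Lemma next_expect_eq_at tau1 tau2 m x :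
  tau1 x = tau2 x -> next_expect tau1 m x = next_expect tau2 m x.
Proof. by move=> eq12; apply: eq_bigr => y _; rewrite (trans_eq_at _ eq12). Qed.

Lemma next_expect_sink tau m s : is_sink G s -> next_expect tau m s = m s.
Proof.
move=> ss; rewrite /next_expect.
by under eq_bigr do rewrite trans_sink //; exact: sum_delta_mul.
Qed.

Lemma nondecreasing_bounded_cvgn_le (u : nat -> R) (M : R) :
  nondecreasing_seq u -> (forall n, u n <= M) -> cvgn u /\ forall n, u n <= limn u.
Proof.
move=> u_nd u_le; have u_cvg : cvgn u.
  by apply: nondecreasing_is_cvgn => //; exists M => _ [n _ <-].
by split => //; exact: nondecreasing_cvgn_le.
Qed.

Definition payoff_within tau n x :=
  \sum_(s | is_sink G s) sval s * nstep G sigma tau n x s.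

Lemma payoff_within0 tau x :
  payoff_within tau 0 x = if is_sink G x then sval x else 0.
Proof.
rewrite /payoff_within /= big_mkcond (bigD1 x) //= eqxx mulr1 big1 ?addr0.
  by case: ifP.
by move=> s sx; rewrite eq_sym (negbTE sx) mulr0; case: ifP.
Qed.

Lemma payoff_withinS tau n x :
  payoff_within tau n.+1 x = next_expect tau (payoff_within tau n) x.
Proof.
rewrite /payoff_within /next_expect /=.
under eq_bigr do rewrite mulr_sumr.
rewrite exchange_big /=; apply: eq_bigr => y _.
by rewrite mulr_sumr; apply: eq_bigr => s _; rewrite mulrCA.
Qed.

Lemma payoff_within_bounds tau n x : 0 <= payoff_within tau n x <= 1.
Proof.
elim: n x => [|n IH] x; last by rewrite payoff_withinS next_expect_bounds.
rewrite payoff_within0; case: ifP => xs; last by rewrite lexx ler01.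
by rewrite sval_ge0 ?sval_le1.
Qed.

Lemma payoff_within_nondecreasing tau x :
  nondecreasing_seq (fun n => payoff_within tau n x).
Proof.
apply/nondecreasing_seqP => n; elim: n x => [|n IH] x; last first.
  by rewrite (payoff_withinS _ n.+1) payoff_withinS; exact: next_expect_le.
rewrite payoff_withinS; case: (boolP (is_sink G x)) => xs.
  by rewrite next_expect_sink.
rewrite payoff_within0 (negbTE xs).
by case/andP: (next_expect_bounds tau x (payoff_within_bounds tau 0)).
Qed.

Lemma payoff_within_cvg_le tau x :
  cvgn (fun n => payoff_within tau n x) /\
  forall n, payoff_within tau n x <= value tau x.
Proof.
apply: (nondecreasing_bounded_cvgn_le (M := 1)).
  exact: payoff_within_nondecreasing.
by move=> n; case/andP: (payoff_within_bounds tau n x).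
Qed.

Lemma value_ge0 tau x : 0 <= value tau x.
Proof.
apply: le_trans ((payoff_within_cvg_le tau x).2 0).
by case/andP: (payoff_within_bounds tau 0 x).
Qed.

Lemma sval_le_value tau s : is_sink G s -> sval s <= value tau s.
Proof.
by move=> ss; have := (payoff_within_cvg_le tau s).2 0; rewrite payoff_within0 ss.
Qed.

Lemma value_next_expect tau x : value tau x = next_expect tau (value tau) x.
Proof.
have cvg_S : (payoff_within tau n.+1 x @[n --> \oo] --> value tau x)%classic.
  by rewrite (cvg_shiftS (payoff_within tau ^~ x)); exact: (payoff_within_cvg_le tau x).1.
suff cvg_next : (payoff_within tau n.+1 x @[n --> \oo] -->
                 next_expect tau (value tau) x)%classic.
  exact: cvg_unique cvg_S cvg_next.
under eq_cvg do rewrite payoff_withinS.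
apply: cvg_big => [|y _]; first exact: add_continuous.
exact: cvgMl_tmp (payoff_within_cvg_le tau y).1.
Qed.

Lemma value_le_super tau m :
  (forall y, 0 <= m y) -> (forall s, is_sink G s -> sval s <= m s) ->
  (forall y, next_expect tau m y <= m y) -> forall x, value tau x <= m x.
Proof.
move=> m_ge0 m_sink m_super.
have payoff_le n x : payoff_within tau n x <= m x.
  elim: n x => [|n IH] x; last first.
    by rewrite payoff_withinS (le_trans _ (m_super x)) ?next_expect_le.
  by rewrite payoff_within0; case: ifP => xs; [exact: m_sink | exact: m_ge0].
move=> x; apply: limr_le; first exact: (payoff_within_cvg_le tau x).1.
by apply: nearW => n; exact: payoff_le.
Qed.

Lemma value_le_next_expect tau m y :
  (forall z, m z <= value tau z) -> next_expect tau m y <= value tau y.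
Proof. by move=> m_le; rewrite value_next_expect next_expect_le. Qed.

Definition switch_better tau1 tau2 x :=
  if value tau2 x < value tau1 x then tau2 x else tau1 x.

Lemma value_switch_better tau1 tau2 x :
  value (switch_better tau1 tau2) x <= Num.min (value tau1 x) (value tau2 x).
Proof.
pose m z := Num.min (value tau1 z) (value tau2 z).
apply: (@value_le_super _ m) => [y|s ss|y]; first by rewrite le_min !value_ge0.
  by rewrite le_min !sval_le_value.
have [m_le1 m_le2] : (forall z, m z <= value tau1 z) /\ (forall z, m z <= value tau2 z).
  by split=> z; rewrite ge_min lexx ?orbT.
rewrite le_min; case: (ltP (value tau2 y) (value tau1 y)) => [lt21|le12].
  have sw : switch_better tau1 tau2 y = tau2 y by rewrite /switch_better lt21.
  rewrite (next_expect_eq_at _ sw) value_le_next_expect // andbT.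
  exact/ltW/(le_lt_trans (value_le_next_expect y m_le2)).
have sw : switch_better tau1 tau2 y = tau1 y by rewrite /switch_better ltNge le12.
rewrite (next_expect_eq_at _ sw) value_le_next_expect //.
exact: le_trans (value_le_next_expect y m_le1) le12.
Qed.

Lemma exists_min_strategy : exists tau, min_strategy G tau.
Proof.
exists (fun x => odflt x [pick y | arc x y]) => x kx.
have [y xy] : exists y, arc x y by apply: out_nonempty; rewrite kx.
by case: pickP => [z //|no_arc]; rewrite no_arc in xy.
Qed.

Definition total_value (tau : {ffun V -> V}) := \sum_x value tau x.

Lemma exists_best_response : exists tau, best_response G sigma tau.
Proof.
have [tau0 tau0_min] := exists_min_strategy.
pose is_min_strategy (f : {ffun V -> V}) := `[< min_strategy G f >].
have tau0_minb : is_min_strategy [ffun x => tau0 x].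
  by apply/asboolP => x kx; rewrite ffunE; exact: tau0_min.
case: (@arg_minP _ _ _ _ is_min_strategy total_value tau0_minb).
move=> tau /asboolP tau_min tau_le.
exists tau; split=> // tau' tau'_min x; rewrite leNgt; apply/negP => lt'x.
pose sw := [ffun y => switch_better tau tau' y].
have sw_le y : value sw y <= Num.min (value tau y) (value tau' y).
  have -> : (sw : V -> V) = switch_better tau tau' by apply/funext => z; rewrite ffunE.
  exact: value_switch_better.
have sw_min : min_strategy G sw.
  move=> y ky; rewrite ffunE /switch_better.
  by case: ifP => _; [exact: tau'_min | exact: tau_min].
have := tau_le sw (asboolT sw_min); apply/negP; rewrite -ltNge.
rewrite /total_value (bigD1 x) // [X in _ < X](bigD1 x) //=.
apply: ltr_leD.
  by apply: le_lt_trans lt'x; rewrite (le_trans (sw_le x)) ?ge_min ?lexx ?orbT.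
by apply: ler_sum => y _; rewrite (le_trans (sw_le y)) ?ge_min ?lexx.
Qed.

Lemma hit_within_bounds tau A n x : 0 <= hit_within tau A n x <= 1.
Proof.
elim: n x => [|n IH] x /=; first by case: (x \in A); rewrite ?lexx ?ler01.
by case: (x \in A); [rewrite ler01 lexx | exact: next_expect_bounds].
Qed.

Lemma hit_within_nondecreasing tau A x : nondecreasing_seq (hit_within tau A ^~ x).
Proof.
apply/nondecreasing_seqP => n; elim: n x => [|n IH] x /=; case: (x \in A) => //.
  by case/andP: (next_expect_bounds tau x (hit_within_bounds tau A 0)).
exact: next_expect_le.
Qed.

Lemma hit_within_le_prob tau A n x : hit_within tau A n x <= hit_prob G sigma tau A x.
Proof.
have le1 k : hit_within tau A k x <= 1 by case/andP: (hit_within_bounds tau A k x).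
by have [_] := nondecreasing_bounded_cvgn_le (hit_within_nondecreasing tau A x) le1.
Qed.

Lemma absorbing_closed tau (Z : {set V}) x y :
  absorbing tau Z -> x \in Z -> trans tau x y != 0 -> y \in Z.
Proof.
move=> [_ Z_stay] xZ xy; apply/negPn/negP => yZ.
have := hit_within_le_prob tau (~: Z) 1 x; rewrite Z_stay // leNgt => /negP; apply.
rewrite /= inE xZ /= (bigD1 y) //= inE yZ mulr1.
apply: (@lt_le_trans _ _ (trans tau x y)); first by rewrite lt_neqAle eq_sym xy trans_ge0.
rewrite lerDl; apply: sumr_ge0 => z _.
by rewrite mulr_ge0 ?trans_ge0 //; case: (z \in ~: Z).
Qed.

Lemma closed_absorbing tau (Z : {set V}) :
  (forall x, x \in Z -> ~~ is_sink G x) ->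
  (forall x y, x \in Z -> trans tau x y != 0 -> y \in Z) -> absorbing tau Z.
Proof.
move=> Z_nosink Z_closed; split=> // x xZ; rewrite /hit_prob.
suff -> : (fun n => hit_within tau (~: Z) n x : R^o) = fun=> 0 by exact: lim_cst.
apply: funext => n; elim: n x xZ => [|n IH] x xZ /=; rewrite inE xZ //=.
apply: big1 => y _; have [->|xy] := eqVneq (trans tau x y) 0; first by rewrite mul0r.
by rewrite IH ?mulr0 // (Z_closed x).
Qed.

Lemma ZunionP tau x : reflect (exists Z, absorbing tau Z /\ x \in Z) (x \in Zunion tau).
Proof. by rewrite inE; exact: asboolP. Qed.

Lemma Zunion_nosink tau x : x \in Zunion tau -> ~~ is_sink G x.
Proof. by case/ZunionP=> Z [[Z_nosink _] xZ]; exact: Z_nosink. Qed.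

Lemma Zunion_closed tau x y :
  x \in Zunion tau -> trans tau x y != 0 -> y \in Zunion tau.
Proof.
case/ZunionP=> Z [Z_abs xZ] xy; apply/ZunionP; exists Z; split=> //.
exact: absorbing_closed xy.
Qed.

(* Playing inside an absorbing set never reaches a sink, so it yields value 0. *)
Lemma value_absorbing_le tau tau0 W :
  absorbing tau W -> {in ~: W, tau =1 tau0} -> forall x, value tau x <= value tau0 x.
Proof.
move=> W_abs tau_off.
pose m y := if y \in W then 0 else value tau0 y.
have m_le y : m y <= value tau0 y by rewrite /m; case: ifP; rewrite ?value_ge0.
move=> x; apply: le_trans (m_le x); apply: value_le_super => [y|s ss|y].
- by rewrite /m; case: ifP; rewrite ?value_ge0.
- by rewrite /m ifN ?sval_le_value //; apply: contraTN ss; exact: W_abs.1.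
case: (boolP (y \in W)) => yW; last first.
  rewrite (next_expect_eq_at _ (tau_off y _)) ?inE //.
  by rewrite /m (negbTE yW) value_le_next_expect.
rewrite /m yW /next_expect big1 // => z _.
have [->|yz] := eqVneq (trans tau y z) 0; first by rewrite mul0r.
by rewrite (absorbing_closed W_abs yW yz) mulr0.
Qed.

Lemma exists_patch_absorbing (W : {set V}) tau0 :
  min_strategy G tau0 ->
  (forall y, y \in W ->
     exists2 t, min_strategy G t & y \in Zunion t /\ Zunion t \subset W) ->
  exists tau, [/\ min_strategy G tau, {in ~: W, tau =1 tau0} & absorbing tau W].
Proof.
move=> tau0_min W_cover.
pose covers y t :=
  y \in W -> [/\ min_strategy G t, y \in Zunion t & Zunion t \subset W].
have [pick pick_spec] : {pick : V -> V -> V & forall y, covers y (pick y)}.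
  apply: choice => y; case: (boolP (y \in W)) => [/W_cover[t t_min [yt tW]]|yW].
    by exists t.
  by exists tau0; rewrite /covers (negbTE yW).
pose tau y := if y \in W then pick y y else tau0 y.
exists tau; split.
- move=> y ky; rewrite /tau; case: ifP => [/pick_spec[t_min _ _]|_].
    exact: t_min.
  exact: tau0_min.
- by move=> y; rewrite inE /tau => /negbTE ->.
apply: closed_absorbing => [y /pick_spec[_ yZ _]|y z yW yz].
  exact: Zunion_nosink yZ.
have [_ yZ ZW] := pick_spec y yW.
apply: (fintype.subsetP ZW); apply: Zunion_closed yZ _.
by rewrite -(@trans_eq_at tau) // /tau yW.
Qed.

End Game.

(* The legality of sigma plays no role: values and absorbing sets make sense for
   any sigma. *)
Theorem lemma20 (R : realType) (V : finType) (G : ssg R V) (sigma : V -> V) :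
  max_strategy G sigma ->
  exists tau : V -> V, best_response G sigma tau /\
    forall tau' : V -> V, min_strategy G tau' ->
      Zunion G sigma tau' \subset Zunion G sigma tau.
Proof.
move=> _.
have [tau0 [tau0_min tau0_best]] := exists_best_response G sigma.
pose W := [set y | `[< exists2 t, min_strategy G t & y \in Zunion G sigma t >]].
have inW t y : min_strategy G t -> y \in Zunion G sigma t -> y \in W.
  by move=> t_min yt; rewrite inE; apply/asboolP; exists t.
have [y|tau [tau_min tau_off W_abs]] := @exists_patch_absorbing _ _ G sigma W _ tau0_min.
  rewrite inE => /asboolP[t t_min yt]; exists t => //.
  by split=> //; apply/fintype.subsetP => z; exact: inW.
exists tau; split.
  split=> // tau' tau'_min x; apply: le_trans (tau0_best _ tau'_min x).
  exact: value_absorbing_le W_abs tau_off x.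
move=> tau' tau'_min; apply/fintype.subsetP => y y_tau'.
by apply/ZunionP; exists W; split=> //; exact: inW y_tau'.
Qed.
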